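(* For non-zero integers $a,b$ let $f_{a,b}:(0,\infty)\to(0,\infty)$, $f_{a,b}(z)=z^{a/b}$ (real positive branch). Let $I\subseteq(0,\infty)$ have non-empty interior. Then there exist uncountably many $\zeta\in\mathscr{L}\cap(0,\infty)$ such that $f_{a,b}(\zeta)\in\mathscr{L}$ simultaneously for all non-zero integers $a,b$. Moreover, for any fixed non-zero integers $a,b$, there are uncountably many $\zeta\in\mathscr{L}\cap I$ with $f_{a,b}(\zeta)\in\mathscr{L}$.
   Context: $\mathscr{L}$ is the set of Liouville numbers (real irrational $\zeta$ such that for every $\eta>0$ there are infinitely many rationals $y/x$, $x\geq1$, with $|\zeta-y/x|\leq x^{-\eta}$). *)

From Stdlib Require Import Reals ZArith List.
Open Scope R_scope.

Definition irrational (z : R) : Prop :=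
  ~ exists (p q : Z), q <> 0%Z /\ z = IZR p / IZR q.

Definition infinite_set (S : R -> Prop) : Prop :=
  forall l : list R, exists r, S r /\ ~ In r l.

Definition countable_set (S : R -> Prop) : Prop :=
  exists f : nat -> R, forall z, S z -> exists n, f n = z.

Definition uncountable_set (S : R -> Prop) : Prop := ~ countable_set S.

Definition Liouville (z : R) : Prop :=
  irrational z /\
  forall eta : R, 0 < eta ->
    infinite_set (fun r => exists (x y : Z), (1 <= x)%Z /\ r = IZR y / IZR x /\
                      Rabs (z - IZR y / IZR x) <= Rpower (IZR x) (- eta)).

Definition f_ab (a b : Z) (z : R) : R := Rpower z (IZR a / IZR b).

Definition nonempty_interior (I : R -> Prop) : Prop :=
  exists c r : R, 0 < r /\ forall z, Rabs (z - c) < r -> I z.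

From Stdlib Require Import Reals ZArith List Lra Lia Classical ClassicalEpsilon.
Open Scope R_scope.

(* Take [z] in the intersection of nested intervals [[r_k, r_k + w_k]], where
   [r_k = (p_k / s_k)^(k!)] and the width [w_k] is tiny compared with every power
   of [p_k s_k]; at step [k] the interval is also moved off the [k]-th term of a
   given enumeration, so such [z] escape every countable family.  For fixed
   [a/b] and [k >= |b|], [r_k^(a/b) = (p_k / s_k)^(k! a / b)] is a rational with
   denominator at most [(p_k s_k)^(k! |a|)], and by the mean value theorem it is
   within a constant times [w_k] of [z^(a/b)]; hence [z^(a/b)] is Liouville.
   The case [a = b = 1] shows that [z] itself is Liouville. *)

Lemma Rpower_pos x e : 0 < Rpower x e.
Proof. apply exp_pos. Qed.

Lemma Rpower_le_at_endpoints A B c e : 0 < A -> A <= c <= B ->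
  Rpower c e <= Rpower A e + Rpower B e.
Proof.
  intros HA Hc; pose proof (Rpower_pos A e); pose proof (Rpower_pos B e).
  destruct (Rle_or_lt 0 e) as [He|He].
  - pose proof (Rle_Rpower_l c B e He ltac:(lra)); lra.
  - set (d := - e); replace e with (- d) by (unfold d; ring); rewrite !Rpower_Ropp.
    assert (Hc' : Rpower A d <= Rpower c d) by (apply Rle_Rpower_l; unfold d; lra).
    pose proof (Rinv_le_contravar _ _ (Rpower_pos A d) Hc').
    pose proof (Rinv_0_lt_compat _ (Rpower_pos B d)); lra.
Qed.

Lemma Rpower_lipschitz A B q x y : 0 < A -> A <= x -> x < y -> y <= B ->
  Rabs (Rpower y q - Rpower x q) <= Rabs q * (Rpower A (q - 1) + Rpower B (q - 1)) * (y - x).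
Proof.
  intros HA Hx Hxy Hy.
  destruct (MVT_cor2 (fun x => Rpower x q) (fun c => q * Rpower c (q - 1)) x y Hxy)
    as [c [Hc1 Hc2]].
  { intros c Hc; apply derivable_pt_lim_power; lra. }
  rewrite Hc1, !Rabs_mult, (Rabs_right (y - x)), (Rabs_right (Rpower c _)) by
    (left; (lra || apply Rpower_pos)).
  apply Rmult_le_compat_r; [lra|]; apply Rmult_le_compat_l; [apply Rabs_pos|].
  apply Rpower_le_at_endpoints; lra.
Qed.

Lemma Rpower_inj_l x y q : 0 < x -> 0 < y -> q <> 0 -> Rpower x q = Rpower y q -> x = y.
Proof.
  intros Hx Hy Hq E; apply ln_inv; auto.
  apply (f_equal ln) in E; rewrite !ln_Rpower in E.
  now apply Rmult_eq_reg_l with q.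
Qed.

Lemma nat_above (r : R) : exists n : nat, r <= INR n.
Proof.
  destruct (archimed r) as [Hup _]; exists (Z.to_nat (up r)).
  destruct (Z_le_gt_dec 0 (up r)).
  - rewrite INR_IZR_INZ, Z2Nat.id by lia; lra.
  - pose proof (pos_INR (Z.to_nat (up r))); pose proof (IZR_lt _ _ (Z.gt_lt _ _ g)); lra.
Qed.

Lemma list_avoid_injective (g : nat -> R) (l : list R) :
  (forall i j, g i = g j -> i = j) -> exists K, forall k, (K <= k)%nat -> ~ In (g k) l.
Proof.
  intros Hg; induction l as [|x l [K HK]].
  - exists 0%nat; intros k _ [].
  - destruct (classic (exists j, g j = x)) as [[j <-]|Hx].
    + exists (Nat.max K (S j)); intros k Hk [E|Hin].
      * apply Hg in E; lia.
      * apply (HK k); [lia|auto].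
    + exists K; intros k Hk [E|Hin]; [apply Hx; eauto|apply (HK k); auto].
Qed.

Lemma rational_gap P Q X Y : Q <> 0%Z -> (1 <= X)%Z -> IZR P / IZR Q <> IZR Y / IZR X ->
  / (Rabs (IZR Q) * IZR X) <= Rabs (IZR P / IZR Q - IZR Y / IZR X).
Proof.
  intros HQ HX Hne.
  assert (HQ' : IZR Q <> 0) by now apply not_0_IZR.
  assert (HX' : 1 <= IZR X) by now apply IZR_le.
  assert (Hnum : (P * X - Q * Y <> 0)%Z).
  { intro E; apply Hne; apply (Rmult_eq_reg_r (IZR Q * IZR X)); [|apply Rmult_integral_contrapositive; split; lra].
    field_simplify; [|lra|lra]; rewrite <- !mult_IZR; f_equal; lia. }
  replace (IZR P / IZR Q - IZR Y / IZR X) with (IZR (P * X - Q * Y) / (IZR Q * IZR X))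
    by (rewrite minus_IZR, !mult_IZR; field; lra).
  unfold Rdiv; rewrite Rabs_mult, Rabs_inv, Rabs_mult, (Rabs_right (IZR X)) by lra.
  rewrite <- (Rmult_1_l (/ _)) at 1; apply Rmult_le_compat_r.
  - left; apply Rinv_0_lt_compat, Rmult_lt_0_compat; [apply Rabs_pos_lt|]; lra.
  - rewrite Rabs_Zabs; apply IZR_le; lia.
Qed.

Lemma Liouville_of_approximations z :
  (forall (n : nat) (l : list R), exists X Y : Z, (1 <= X)%Z /\
     IZR Y / IZR X <> z /\ ~ In (IZR Y / IZR X) l /\
     Rabs (z - IZR Y / IZR X) <= / (INR (S n) * IZR X ^ S n)) ->
  Liouville z.
Proof.
  intros Happ; split.
  - intros [P [Q [HQ ->]]].
    destruct (Happ (Z.abs_nat Q) nil) as [X [Y [HX [Hne [_ Hclose]]]]].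
    pose proof (rational_gap P Q X Y HQ HX (not_eq_sym Hne)) as Hgap.
    assert (HX' : 1 <= IZR X) by now apply IZR_le.
    assert (HQ' : 0 < Rabs (IZR Q)) by now apply Rabs_pos_lt, not_0_IZR.
    assert (Hn : Rabs (IZR Q) < INR (S (Z.abs_nat Q))).
    { rewrite S_INR, INR_IZR_INZ, Nat2Z.inj_abs_nat, Rabs_Zabs; lra. }
    assert (Hpow : IZR X <= IZR X ^ S (Z.abs_nat Q)) by (rewrite <- (pow_1 (IZR X)) at 1; apply Rle_pow; lia || lra).
    assert (/ (INR (S (Z.abs_nat Q)) * IZR X ^ S (Z.abs_nat Q)) < / (Rabs (IZR Q) * IZR X)).
    { apply Rinv_lt_contravar; [apply Rmult_lt_0_compat; apply Rmult_lt_0_compat; lra|].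
      nra. }
    lra.
  - intros eta Heta l.
    destruct (nat_above eta) as [n Hn].
    destruct (Happ n l) as [X [Y [HX [_ [Hl Hclose]]]]].
    exists (IZR Y / IZR X); split; [exists X, Y; repeat split; auto|auto].
    assert (HX' : 1 <= IZR X) by now apply IZR_le.
    eapply Rle_trans; [exact Hclose|]; eapply Rle_trans with (Rpower (IZR X) (- INR (S n))).
    + rewrite Rpower_Ropp, Rpower_pow by lra.
      apply Rinv_le_contravar; [apply pow_lt; lra|].
      rewrite <- (Rmult_1_l (IZR X ^ S n)) at 1; apply Rmult_le_compat_r; [left; apply pow_lt; lra|].
      rewrite S_INR; pose proof (pos_INR n); lra.
    + apply Rle_Rpower; [lra|]; rewrite S_INR; lra.
Qed.
Lemma exists_ratio_between al be : 0 < al < be ->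
  exists p s : nat, (1 <= p)%nat /\ (1 <= s)%nat /\ al < INR p / INR s < be.
Proof.
  intros Hab.
  destruct (nat_above (/ (be - al))) as [s0 Hs0]; set (s := S s0).
  assert (Hs : / (be - al) < INR s) by (unfold s; rewrite S_INR; lra).
  assert (Hsp : 0 < INR s) by (unfold s; rewrite S_INR; pose proof (pos_INR s0); lra).
  assert (Hgap : 1 < (be - al) * INR s).
  { apply (Rmult_lt_compat_l (be - al)) in Hs; [|lra]; rewrite Rinv_r in Hs; lra. }
  destruct (archimed (al * INR s)) as [Hu1 Hu2].
  assert (Hup : (0 < up (al * INR s))%Z).
  { apply lt_0_IZR; pose proof (Rmult_lt_0_compat _ _ (proj1 Hab) Hsp); lra. }
  exists (Z.to_nat (up (al * INR s))), s; split; [lia|split; [unfold s; lia|]].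
  rewrite INR_IZR_INZ, Z2Nat.id by lia.
  split; [apply Rmult_lt_reg_r with (INR s)|apply Rmult_lt_reg_r with (INR s)];
    auto; unfold Rdiv; rewrite Rmult_assoc, Rinv_l by lra; lra.
Qed.

Lemma exists_ratio_pow_between A B N : 0 < A < B -> (1 <= N)%nat ->
  exists p s : nat, (1 <= p)%nat /\ (1 <= s)%nat /\ A < (INR p / INR s) ^ N < B.
Proof.
  intros HAB HN.
  assert (HN' : 0 < INR N) by (apply lt_0_INR; lia).
  assert (Hroot : forall x, 0 < x -> Rpower (Rpower x (/ INR N)) (INR N) = x).
  { intros x Hx; rewrite Rpower_mult, Rinv_l, Rpower_1; lra. }
  assert (Hroots : 0 < Rpower A (/ INR N) < Rpower B (/ INR N)).
  { split; [apply Rpower_pos|apply Rlt_Rpower_l; [apply Rinv_0_lt_compat|]; lra]. }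
  destruct (exists_ratio_between _ _ Hroots) as [p [s [Hp [Hs Hps]]]].
  exists p, s; split; [auto|split; [auto|]].
  rewrite <- Rpower_pow by lra.
  rewrite <- (Hroot A), <- (Hroot B) at 1 by lra.
  split; apply Rlt_Rpower_l; lra.
Qed.

Lemma ratio_pow_INR p s e : (1 <= s)%nat ->
  (INR p / INR s) ^ e = INR (p ^ e) / INR (s ^ e).
Proof.
  intros Hs; rewrite !pow_INR; unfold Rdiv; rewrite Rpow_mult_distr, pow_inv; reflexivity.
Qed.

Lemma Rpower_ratio_IZR p s m : (1 <= p)%nat -> (1 <= s)%nat ->
  exists X Y : nat, (1 <= X)%nat /\ (X <= (p * s) ^ Z.abs_nat m)%nat /\
    Rpower (INR p / INR s) (IZR m) = INR Y / INR X.
Proof.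
  intros Hp Hs; set (e := Z.abs_nat m).
  assert (Hu : 0 < INR p / INR s) by (apply Rdiv_lt_0_compat; apply lt_0_INR; lia).
  assert (Hpe : (p ^ e <> 0)%nat) by (apply Nat.pow_nonzero; lia).
  assert (Hse : (s ^ e <> 0)%nat) by (apply Nat.pow_nonzero; lia).
  destruct (Z.le_gt_cases 0 m) as [Hm|Hm].
  - exists (s ^ e)%nat, (p ^ e)%nat; split; [lia|split; [apply Nat.pow_le_mono_l; nia|]].
    replace (IZR m) with (INR e) by (unfold e; rewrite INR_IZR_INZ, Nat2Z.inj_abs_nat, Z.abs_eq; auto).
    now rewrite Rpower_pow, ratio_pow_INR by auto.
  - exists (p ^ e)%nat, (s ^ e)%nat; split; [lia|split; [apply Nat.pow_le_mono_l; nia|]].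
    replace (IZR m) with (- INR e)
      by (unfold e; rewrite INR_IZR_INZ, Nat2Z.inj_abs_nat, Z.abs_neq, opp_IZR by lia; ring).
    rewrite Rpower_Ropp, Rpower_pow, ratio_pow_INR by auto.
    apply not_0_INR in Hpe; apply not_0_INR in Hse; field; auto.
Qed.

Lemma Nat_divide_fact i k : (1 <= i <= k)%nat -> Nat.divide i (fact k).
Proof.
  induction k as [|k IH]; intros Hi; [lia|].
  rewrite fact_simpl; destruct (Nat.eq_dec i (S k)) as [->|Hne].
  - now apply Nat.divide_mul_l.
  - apply Nat.divide_mul_r, IH; lia.
Qed.

Lemma Rpower_fact_pow_ratio p s k a b : (1 <= p)%nat -> (1 <= s)%nat ->
  b <> 0%Z -> (Z.abs_nat b <= k)%nat ->
  exists X Y : nat, (1 <= X)%nat /\ (X <= (p * s) ^ (fact k * Z.abs_nat a))%nat /\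
    Rpower ((INR p / INR s) ^ fact k) (IZR a / IZR b) = INR Y / INR X.
Proof.
  intros Hp Hs Hb Hk.
  destruct (Nat_divide_fact (Z.abs_nat b) k ltac:(lia)) as [c Hc].
  set (d := (Z.of_nat c * Z.sgn b)%Z).
  assert (Hd : Z.of_nat (fact k) = (d * b)%Z).
  { unfold d; rewrite Hc, Nat2Z.inj_mul, Nat2Z.inj_abs_nat; lia. }
  assert (Hu : 0 < INR p / INR s) by (apply Rdiv_lt_0_compat; apply lt_0_INR; lia).
  destruct (Rpower_ratio_IZR p s (d * a) Hp Hs) as [X [Y [HX1 [HX HXY]]]].
  exists X, Y; split; [auto|split].
  - eapply Nat.le_trans; [exact HX|]; apply Nat.pow_le_mono_r; [nia|].
    apply Nat2Z.inj_le; rewrite Nat2Z.inj_mul, !Nat2Z.inj_abs_nat, Hd; nia.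
  - rewrite <- HXY, <- Rpower_pow, Rpower_mult by auto; f_equal.
    rewrite INR_IZR_INZ, Hd, !mult_IZR; field; now apply not_0_IZR.
Qed.
Section NestedIntervals.

Variable T : Type.
Variable adm : nat -> T -> Prop.
Variable lo : nat -> T -> R.
Variable width : T -> R.

Hypothesis adm_lo_pos : forall k t, adm k t -> 0 < lo k t.
Hypothesis adm_width_pos : forall k t, adm k t -> 0 < width t.
Hypothesis adm_inside : forall k A B, 0 < A < B ->
  exists t, adm k t /\ A < lo k t /\ lo k t + width t < B.

Definition refines (k : nat) (x : R) (t t' : T) : Prop :=
  adm (S k) t' /\ lo k t < lo (S k) t' /\ lo (S k) t' + width t' < lo k t + width t /\
  (x < lo (S k) t' \/ lo (S k) t' + width t' < x).

Lemma adm_refines k t x : adm k t -> exists t', refines k x t t'.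
Proof.
  intros Ht; unfold refines; pose proof (adm_lo_pos k t Ht); pose proof (adm_width_pos k t Ht).
  set (l := lo k t) in *; set (w := width t) in *.
  destruct (Rle_or_lt (l + w / 2) x) as [Hx|Hx].
  - destruct (adm_inside (S k) l (l + w / 2) ltac:(lra)) as [t' [Ht' Hin]].
    exists t'; split; [auto|split; [lra|split; [lra|right; lra]]].
  - destruct (adm_inside (S k) (l + w / 2) (l + w) ltac:(lra)) as [t' [Ht' Hin]].
    exists t'; split; [auto|split; [lra|split; [lra|left; lra]]].
Qed.

Lemma nested_limit_avoiding (f : nat -> R) A B : 0 < A < B ->
  exists (t : nat -> T) (z : R), (forall k, adm k (t k)) /\
    (forall i j, (i < j)%nat -> lo i (t i) < lo j (t j)) /\
    (forall k, lo k (t k) < z <= lo k (t k) + width (t k)) /\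
    A < z < B /\ (forall n, z <> f n).
Proof.
  intros HAB.
  destruct (adm_inside 0 A B HAB) as [t0 [Ht0 Hin0]].
  (* made total so that [choice] applies; it is vacuous off admissible stages *)
  destruct (choice (fun (c : nat * R * T) t' =>
      adm (fst (fst c)) (snd c) -> refines (fst (fst c)) (snd (fst c)) (snd c) t'))
    as [next Hnext].
  { intros [[k x] t]; destruct (classic (adm k t)) as [Ht|Ht].
    - destruct (adm_refines k t x Ht) as [t' Ht']; now exists t'.
    - exists t; contradiction. }
  pose (t := fix go (k : nat) : T := match k with O => t0 | S k => next (k, f k, go k) end).
  assert (Hstep : forall k, adm k (t k) /\ refines k (f k) (t k) (t (S k))).
  { induction k as [|k [Hk Hr]].
    - split; [exact Ht0|exact (Hnext (0%nat, f 0%nat, t0) Ht0)].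
    - split; [apply Hr|exact (Hnext (S k, f (S k), t (S k)) (proj1 Hr))]. }
  set (l k := lo k (t k)); set (h k := lo k (t k) + width (t k)).
  assert (Hw : forall k, l k < h k) by (intro k; pose proof (adm_width_pos k _ (proj1 (Hstep k))); unfold l, h; lra).
  assert (Hl : Un_growing l) by (intro k; destruct (Hstep k) as [_ Hr]; unfold refines in Hr; unfold l; lra).
  assert (Hh : Un_decreasing h) by (intro k; destruct (Hstep k) as [_ Hr]; unfold refines in Hr; unfold h; lra).
  assert (Hlh : forall j k, l j <= h k).
  { intros j k; destruct (Nat.le_ge_cases j k) as [Hjk|Hkj].
    - pose proof (growing_prop l k j Hl Hjk); pose proof (Hw k); lra.
    - pose proof (decreasing_prop h k j Hh Hkj); pose proof (Hw j); lra. }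
  destruct (completeness (fun x => exists k, x = l k)) as [z [Hub Hlub]].
  { exists (h 0%nat); intros x [k ->]; apply Hlh. }
  { exists (l 0%nat), 0%nat; reflexivity. }
  assert (Hlz : forall k, l k <= z) by (intro k; apply Hub; now exists k).
  assert (Hzh : forall k, z <= h k) by (intro k; apply Hlub; intros x [j ->]; apply Hlh).
  assert (Hinc : forall i j, (i < j)%nat -> l i < l j).
  { intros i j Hij; pose proof (growing_prop l j (S i) Hl Hij).
    destruct (Hstep i) as [_ Hr]; unfold refines in Hr; unfold l in *; lra. }
  exists t, z; split; [intro k; apply Hstep|split; [exact Hinc|split; [|split]]].
  - intro k; pose proof (Hinc k (S k) (Nat.lt_succ_diag_r k)); split; [|apply Hzh].
    pose proof (Hlz (S k)); unfold l in *; lra.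
  - pose proof (Hinc 0%nat 1%nat Nat.lt_0_1); pose proof (Hlz 1%nat); pose proof (Hzh 0%nat).
    unfold l, h in *; simpl t in *; lra.
  - intros n E; destruct (Hstep n) as [_ [_ [_ [_ Hout]]]].
    pose proof (Hlz (S n)); pose proof (Hzh (S n)); unfold l, h in *; lra.
Qed.

End NestedIntervals.

(* The left end of a stage of level [k] is a [k!]-th power so that its
   [(a/b)]-th power is rational as soon as [b] divides [k!]; the exponent
   [k! (k+1)] of the tolerance eventually exceeds [k! |a| n] for all [a], [n]. *)
Record stage := Stage { num : nat; den : nat; width : R }.

Definition stage_lo (k : nat) (t : stage) : R := (INR (num t) / INR (den t)) ^ fact k.

Definition tolerance (k p s : nat) : R := / (INR (S k) * INR ((p * s) ^ (fact k * S k))).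

Definition admissible (k : nat) (t : stage) : Prop :=
  (1 <= num t)%nat /\ (1 <= den t)%nat /\ 0 < width t /\ width t <= tolerance k (num t) (den t).

Lemma tolerance_pos k p s : (1 <= p)%nat -> (1 <= s)%nat -> 0 < tolerance k p s.
Proof.
  intros Hp Hs; apply Rinv_0_lt_compat, Rmult_lt_0_compat; apply lt_0_INR; [lia|].
  assert ((p * s) ^ (fact k * S k) <> 0)%nat by (apply Nat.pow_nonzero; lia); lia.
Qed.

Lemma admissible_lo_pos k t : admissible k t -> 0 < stage_lo k t.
Proof.
  intros [Hp [Hs _]]; apply pow_lt, Rdiv_lt_0_compat; apply lt_0_INR; lia.
Qed.

Lemma admissible_inside k A B : 0 < A < B ->
  exists t, admissible k t /\ A < stage_lo k t /\ stage_lo k t + width t < B.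
Proof.
  intros HAB.
  destruct (exists_ratio_pow_between A ((A + B) / 2) (fact k) ltac:(lra) (lt_O_fact k))
    as [p [s [Hp [Hs Hin]]]].
  pose proof (tolerance_pos k p s Hp Hs).
  pose proof (Rmin_l (tolerance k p s) ((B - A) / 4)).
  pose proof (Rmin_r (tolerance k p s) ((B - A) / 4)).
  assert (0 < Rmin (tolerance k p s) ((B - A) / 4)) by (apply Rmin_glb_lt; lra).
  exists (Stage p s (Rmin (tolerance k p s) ((B - A) / 4))).
  unfold admissible, stage_lo; cbn [num den width]; repeat split; auto; lra.
Qed.

Lemma tolerance_small L (k p s e n X : nat) : 0 <= L -> (1 <= p)%nat -> (1 <= s)%nat ->
  (1 <= X)%nat -> (X <= (p * s) ^ (fact k * e))%nat -> (e * S n <= S k)%nat ->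
  L * INR (S n) <= INR (S k) ->
  L * tolerance k p s <= / (INR (S n) * INR X ^ S n).
Proof.
  intros HL Hp Hs HX1 HX Hen HLn.
  set (H := ((p * s) ^ (fact k * S k))%nat).
  assert (HXH : (X ^ S n <= H)%nat).
  { eapply Nat.le_trans; [apply Nat.pow_le_mono_l; exact HX|].
    rewrite <- Nat.pow_mul_r; apply Nat.pow_le_mono_r; [nia|].
    rewrite <- Nat.mul_assoc; apply Nat.mul_le_mono_l; exact Hen. }
  apply le_INR in HXH; rewrite pow_INR in HXH.
  assert (HXn : 0 < INR X ^ S n) by (apply pow_lt, lt_0_INR; lia).
  assert (Hk : 0 < INR (S k)) by apply lt_0_INR, Nat.lt_0_succ.
  assert (Hn : 0 < INR (S n)) by apply lt_0_INR, Nat.lt_0_succ.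
  unfold tolerance; fold H.
  apply (Rmult_le_reg_r ((INR (S k) * INR H) * (INR (S n) * INR X ^ S n))).
  { apply Rmult_lt_0_compat; apply Rmult_lt_0_compat; lra. }
  replace (L * / (INR (S k) * INR H) * (INR (S k) * INR H * (INR (S n) * INR X ^ S n)))
    with (L * INR (S n) * INR X ^ S n) by (field; lra).
  replace (/ (INR (S n) * INR X ^ S n) * (INR (S k) * INR H * (INR (S n) * INR X ^ S n)))
    with (INR (S k) * INR H) by (field; lra).
  apply Rmult_le_compat; nra.
Qed.

Lemma Liouville_f_ab_of_stages (t : nat -> stage) z a b :
  (forall k, admissible k (t k)) ->
  (forall i j, (i < j)%nat -> stage_lo i (t i) < stage_lo j (t j)) ->
  (forall k, stage_lo k (t k) < z <= stage_lo k (t k) + width (t k)) ->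
  a <> 0%Z -> b <> 0%Z -> Liouville (f_ab a b z).
Proof.
  intros Hadm Hinc Hz Ha Hb; unfold f_ab; set (q := IZR a / IZR b).
  assert (Hq : q <> 0).
  { apply not_0_IZR in Ha, Hb; apply Rmult_integral_contrapositive.
    split; [auto|now apply Rinv_neq_0_compat]. }
  pose (r k := stage_lo k (t k)).
  assert (Hr0 : 0 < r 0%nat) by apply admissible_lo_pos, Hadm.
  assert (Hr : forall k, r 0%nat <= r k).
  { intros [|k]; [lra|left; apply Hinc, Nat.lt_0_succ]. }
  pose (B0 := r 0%nat + width (t 0%nat)).
  pose (L := Rabs q * (Rpower (r 0%nat) (q - 1) + Rpower B0 (q - 1))).
  assert (HL : 0 <= L).
  { apply Rmult_le_pos; [apply Rabs_pos|].
    pose proof (Rpower_pos (r 0%nat) (q - 1)); pose proof (Rpower_pos B0 (q - 1)); lra. }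
  assert (Hclose : forall k, Rabs (Rpower z q - Rpower (r k) q) <= L * width (t k)).
  { intro k; destruct (Hz k); destruct (Hz 0%nat).
    eapply Rle_trans; [apply (Rpower_lipschitz (r 0%nat) B0); auto; unfold B0; lra|].
    apply Rmult_le_compat_l; [exact HL|unfold r; lra]. }
  assert (Hinj : forall i j, Rpower (r i) q = Rpower (r j) q -> i = j).
  { intros i j E; apply Rpower_inj_l in E; try (eapply Rlt_le_trans; [exact Hr0|apply Hr]); auto.
    destruct (Nat.lt_total i j) as [H|[H|H]]; auto; apply Hinc in H; unfold r in E; lra. }
  apply Liouville_of_approximations; intros n l.
  destruct (list_avoid_injective _ l Hinj) as [K2 HK2].
  destruct (nat_above (L * INR (S n))) as [K1 HK1].
  set (k := (K1 + K2 + Z.abs_nat b + Z.abs_nat a * S n)%nat).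
  destruct (Hadm k) as [Hp [Hs [_ Hw]]].
  destruct (Rpower_fact_pow_ratio (num (t k)) (den (t k)) k a b Hp Hs Hb ltac:(lia))
    as [X [Y [HX1 [HX HXY]]]].
  fold q in HXY; change (Rpower (r k) q = INR Y / INR X) in HXY.
  exists (Z.of_nat X), (Z.of_nat Y); rewrite <- !INR_IZR_INZ, <- HXY.
  split; [lia|split; [|split]].
  - assert (Hrk : 0 < r k) by (eapply Rlt_le_trans; [exact Hr0|apply Hr]).
    destruct (Hz k); intro E; apply Rpower_inj_l in E; auto; unfold r in *; lra.
  - apply HK2; lia.
  - eapply Rle_trans; [apply Hclose|].
    eapply Rle_trans; [apply Rmult_le_compat_l; [exact HL|exact Hw]|].
    apply tolerance_small with (e := Z.abs_nat a); auto; [lia|].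
    eapply Rle_trans; [exact HK1|]; apply le_INR; lia.
Qed.

Lemma exists_Liouville_avoiding A B (f : nat -> R) : 0 < A < B ->
  exists z, A < z < B /\ (forall n, z <> f n) /\
    forall a b : Z, a <> 0%Z -> b <> 0%Z -> Liouville (f_ab a b z).
Proof.
  intros HAB.
  destruct (nested_limit_avoiding stage admissible stage_lo width admissible_lo_pos
              (fun k t Ht => proj1 (proj2 (proj2 Ht))) admissible_inside f A B HAB)
    as [t [z [Hadm [Hinc [Hz [HzAB Hf]]]]]].
  exists z; split; [auto|split; [auto|]].
  intros a b Ha Hb; now apply (Liouville_f_ab_of_stages t).
Qed.

Lemma f_ab_1_1 z : 0 < z -> f_ab 1 1 z = z.
Proof. intros Hz; unfold f_ab; replace (IZR 1 / IZR 1) with 1 by (simpl; field); now apply Rpower_1. Qed.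

Lemma uncountable_of_avoiding (S : R -> Prop) :
  (forall f : nat -> R, exists z, S z /\ forall n, z <> f n) -> uncountable_set S.
Proof.
  intros Havoid [f Hf]; destruct (Havoid f) as [z [Hz Hzf]].
  destruct (Hf z Hz) as [n Hn]; now apply (Hzf n).
Qed.

Theorem theorem6p1 (I : R -> Prop)
  (HIpos : forall z, I z -> 0 < z)
  (HIint : nonempty_interior I) :
  uncountable_set (fun z => 0 < z /\ Liouville z /\
     forall a b : Z, a <> 0%Z -> b <> 0%Z -> Liouville (f_ab a b z))
  /\
  (forall a b : Z, a <> 0%Z -> b <> 0%Z ->
     uncountable_set (fun z => I z /\ Liouville z /\ Liouville (f_ab a b z))).
Proof.
  split; [|intros a b Ha Hb]; apply uncountable_of_avoiding; intro f.
  - destruct (exists_Liouville_avoiding 1 2 f ltac:(lra)) as [z [Hz [Hf HL]]].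
    exists z; split; [|exact Hf].
    split; [lra|split; [rewrite <- (f_ab_1_1 z) by lra; apply HL; lia|exact HL]].
  - destruct HIint as [c [r [Hr Hball]]].
    assert (Hc : 0 < c) by (apply HIpos, Hball; rewrite Rminus_diag, Rabs_R0; auto).
    destruct (exists_Liouville_avoiding c (c + r / 2) f ltac:(lra)) as [z [Hz [Hf HL]]].
    exists z; split; [|exact Hf].
    split; [apply Hball; rewrite Rabs_right; lra|].
    split; [rewrite <- (f_ab_1_1 z) by lra; apply HL; lia|now apply HL].
Qed.
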